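(* Let $(\Gamma,f,\mu)$ be a measured Reeb graph with no boundary vertices. Then the set of totally negative circulation functions on $\Gamma$ is a (possibly empty) open convex polytope in the affine space of all circulation functions on $\Gamma$. In particular, the set of totally negative circulation functions on $\Gamma$ is bounded.
   Context: A Reeb graph $(\Gamma,f)$ is a finite connected oriented graph $\Gamma$ with a continuous function $f\colon\Gamma\to\mathbb{R}$ strictly increasing along each edge in its orientation, all of whose vertices are $1$-valent or $3$-valent ($1$-valent ones being of two types, boundary and non-boundary), such that at each $3$-valent vertex there are either two incoming and one outgoing edge or vice versa. At a $3$-valent vertex $v$ the trunk $e_0$ is the edge alone in its direction and the other two edges $e_1,e_2$ are branches. A measure $\mu$ on $\Gamma$ is log-smooth if it has a smooth non-vanishing density $d\mu/df$ at interior points and $1$-valent vertices, and near each $3$-valent vertex $v$, with $\tilde f=f-f(v)$, there are functions $\psi,\eta_0,\eta_1,\eta_2$ smooth near $0$ with $\psi(0)=0,\psi'(0)\ne0$, $\eta_0+\eta_1+\eta_2=0$, and $\mu([v,x])=\varepsilon_i\psi(\tilde f(x))\ln|\tilde f(x)|+\eta_i(\tilde f(x))$ for $x\in e_i$ near $v$, $\varepsilon_0=2,\varepsilon_1=\varepsilon_2=-1$. A measured Reeb graph is a Reeb graph with a log-smooth measure. Let $V$ be the vertex set. A circulation function on $(\Gamma,f,\mu)$ is a function $\mathfrak{c}\colon\Gamma\setminus V\to\mathbb{R}$, continuous, such that: (i) for every vertex $v$ and edge $e\ni v$, the limit of $\mathfrak{c}(x)$ as $x\to v$ along $e$ exists and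 is finite; (ii) if $x,y$ are interior points of one edge, the edge pointing from $x$ to $y$, then $\mathfrak{c}(y)-\mathfrak{c}(x)=\int_{[x,y]}f\,d\mu$; (iii) at every non-boundary vertex $v$, the sum of the limits of $\mathfrak{c}$ at $v$ along edges pointing into $v$ equals the sum of the limits along edges pointing out of $v$. The set of circulation functions is an affine space (possibly empty). For a $3$-valent vertex $v$ with adjacent edges $e_0,e_1,e_2$ let $c_i(v)$ be the limit of $\mathfrak{c}$ at $v$ along $e_i$; $\mathfrak{c}$ is totally negative if $c_0(v),c_1(v),c_2(v)<0$ for every $3$-valent vertex $v$. *)

From Stdlib Require Import Reals Lra List ClassicalEpsilon.
From Stdlib Require Import Relations Relation_Operators FinFun.
From Coquelicot Require Import Coquelicot.
Open Scope R_scope.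

(** The function f is given by its vertex values [fv]; since f is
    continuous and strictly increasing along each edge, f maps the closed edge
    homeomorphically onto [fv (src e), fv (tgt e)], so a point in the interior
    of edge [e] is identified with its f-value [t], fv(src e) < t < fv(tgt e). *)

Record ReebGraph := {
  rV : Type;
  rE : Type;
  src : rE -> rV;
  tgt : rE -> rV;
  fv : rV -> R;
  lE : list rE;
  lE_listing : Listing lE;
  V_finite : FinFun.Finite rV;
  V_inhabited : inhabited rV;
  edge_incr : forall e, fv (src e) < fv (tgt e);
  connected : forall u v : rV,
    clos_refl_trans rV (fun x y => exists e, (src e = x /\ tgt e = y) \/ (src e = y /\ tgt e = x)) u v;
  valence : forall v : rV,
    (exists e, (src e = v \/ tgt e = v) /\ forall e', (src e' = v \/ tgt e' = v) -> e' = e)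
    \/
    (exists e0 e1 e2, e1 <> e2 /\
       ((tgt e1 = v /\ tgt e2 = v /\ src e0 = v) \/ (src e1 = v /\ src e2 = v /\ tgt e0 = v)) /\
       forall e, (src e = v \/ tgt e = v) -> e = e0 \/ e = e1 \/ e = e2)
}.

Arguments src {_}. Arguments tgt {_}. Arguments fv {_}.

Definition ea {G : ReebGraph} (e : rE G) : R := fv (src e).
Definition eb {G : ReebGraph} (e : rE G) : R := fv (tgt e).

Definition univalent {G : ReebGraph} (v : rV G) : Prop :=
  exists e, (src e = v \/ tgt e = v) /\ forall e', (src e' = v \/ tgt e' = v) -> e' = e.

Definition trivalent_config {G : ReebGraph} (v : rV G) (e0 e1 e2 : rE G) : Prop :=
  e1 <> e2 /\
  ((tgt e1 = v /\ tgt e2 = v /\ src e0 = v) \/ (src e1 = v /\ src e2 = v /\ tgt e0 = v)) /\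
  forall e, (src e = v \/ tgt e = v) -> e = e0 \/ e = e1 \/ e = e2.

Definition trivalent {G : ReebGraph} (v : rV G) : Prop :=
  exists e0 e1 e2, trivalent_config v e0 e1 e2.

Definition smooth_near0 (g : R -> R) (d : R) : Prop :=
  forall (n : nat) (t : R), Rabs t < d -> ex_derive_n g n t.

(** [mu_from_vertex rho e v x m] : for a point x (f-value) on edge [e] incident
    to [v], the measure mu([v,x]) of the segment between v and x equals [m];
    mu has density [rho e] with respect to f on edge e (improper integral at v). *)
Definition mu_seg {G : ReebGraph} (rho : rE G -> R -> R) (e : rE G) (v : rV G)
  (x : R) (m : R) : Prop :=
  (src e = v -> is_RInt_gen (rho e) (at_right (fv v)) (at_point x) m) /\
  (tgt e = v -> is_RInt_gen (rho e) (at_point x) (at_left (fv v)) m).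

Definition log_smooth_at {G : ReebGraph} (rho : rE G -> R -> R)
  (v : rV G) (e0 e1 e2 : rE G) : Prop :=
  exists (d : R) (psi eta0 eta1 eta2 : R -> R),
    0 < d /\
    smooth_near0 psi d /\ smooth_near0 eta0 d /\
    smooth_near0 eta1 d /\ smooth_near0 eta2 d /\
    psi 0 = 0 /\ Derive psi 0 <> 0 /\
    (forall t, Rabs t < d -> eta0 t + eta1 t + eta2 t = 0) /\
    (forall x, ea e0 < x < eb e0 -> 0 < Rabs (x - fv v) < d ->
       mu_seg rho e0 v x (2 * psi (x - fv v) * ln (Rabs (x - fv v)) + eta0 (x - fv v))) /\
    (forall x, ea e1 < x < eb e1 -> 0 < Rabs (x - fv v) < d ->
       mu_seg rho e1 v x (- psi (x - fv v) * ln (Rabs (x - fv v)) + eta1 (x - fv v))) /\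
    (forall x, ea e2 < x < eb e2 -> 0 < Rabs (x - fv v) < d ->
       mu_seg rho e2 v x (- psi (x - fv v) * ln (Rabs (x - fv v)) + eta2 (x - fv v))).

Definition smooth_density_at_end {G : ReebGraph} (rho : rE G -> R -> R) (e : rE G)
  (v : rV G) : Prop :=
  exists (g : R -> R) (d : R), 0 < d /\ g (fv v) <> 0 /\
    (forall n t, Rabs (t - fv v) < d -> ex_derive_n g n t) /\
    (forall t, ea e < t < eb e -> Rabs (t - fv v) < d -> rho e t = g t).

(** A measured Reeb graph: a Reeb graph with a log-smooth (positive) measure,
    given on each edge by its density [rho e] with respect to f. *)
Record MeasuredReebGraph := {
  mG :> ReebGraph;
  rho : rE mG -> R -> R;
  rho_interior : forall e t, ea e < t < eb e ->
      0 < rho e t /\ forall n, ex_derive_n (rho e) n t;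
  rho_univalent : forall (v : rV mG) e, univalent v -> (src e = v \/ tgt e = v) ->
      smooth_density_at_end rho e v;
  rho_trivalent : forall (v : rV mG) e0 e1 e2, trivalent_config v e0 e1 e2 ->
      log_smooth_at rho v e0 e1 e2
}.

Definition sum_edges {G : ReebGraph} (P : rE G -> Prop) (F : rE G -> R) : R :=
  fold_right Rplus 0
    (map F (filter (fun e => if excluded_middle_informative (P e) then true else false)
                   (lE G))).

(** Circulation functions: c e t is the value at the point of f-value t
    in the interior of edge e (values outside the interior are irrelevant).
    The graph has no boundary vertices, so (iii) is imposed at every vertex. *)
Definition is_circulation (M : MeasuredReebGraph) (c : rE M -> R -> R) : Prop :=
  (forall e t, ea e < t < eb e -> continuous (c e) t) /\
  exists Ls Lt : rE M -> R,
    (forall e, filterlim (c e) (at_right (ea e)) (locally (Ls e)) /\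
               filterlim (c e) (at_left (eb e)) (locally (Lt e))) /\
    (forall e x y, ea e < x -> x < y -> y < eb e ->
       c e y - c e x = RInt (fun t => t * rho M e t) x y) /\
    (forall v : rV M,
       sum_edges (fun e => tgt e = v) Lt = sum_edges (fun e => src e = v) Ls).

Definition totally_negative (M : MeasuredReebGraph) (c : rE M -> R -> R) : Prop :=
  forall e : rE M,
    (trivalent (src e) -> exists l, l < 0 /\ filterlim (c e) (at_right (ea e)) (locally l)) /\
    (trivalent (tgt e) -> exists l, l < 0 /\ filterlim (c e) (at_left (eb e)) (locally l)).

Definition TN (M : MeasuredReebGraph) (c : rE M -> R -> R) : Prop :=
  is_circulation M c /\ totally_negative M c.

Definition comb {M : MeasuredReebGraph} (lam : R) (c c' : rE M -> R -> R) : rE M -> R -> R :=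
  fun e t => lam * c e t + (1 - lam) * c' e t.

From Stdlib Require Import Reals Lra List FinFun ClassicalEpsilon Classical.
From Stdlib Require Import FunctionalExtensionality.
From Coquelicot Require Import Coquelicot.
Open Scope R_scope.

(* A circulation function is determined on each edge up to an additive constant, since its
   increments are prescribed by the measure; hence the circulations form an affine space, and
   the limits of [c] at the ends of the edges are affine functions of [c]. Total negativity
   says that finitely many of them, those at trivalent ends, are negative: an open convex
   polytope. For boundedness, Kirchhoff's law at every vertex weighted by the value of f
   there shows that the length-weighted sum of the limits at edge targets is the same for
   all circulations. For a totally negative circulation every such limit is [<= 0] (it is
   [0] at a univalent target), so each of them is bounded below by that common sum, and
   the circulation differs on each edge from a fixed one by a bounded constant. *)

Lemma filterlim_lincomb {T} (F : (T -> Prop) -> Prop) {FF : Filter F}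
  (f g : T -> R) (a b lam mu : R) :
  filterlim f F (locally a) -> filterlim g F (locally b) ->
  filterlim (fun x => lam * f x + mu * g x) F (locally (lam * a + mu * b)).
Proof.
  intros Hf Hg.
  apply (filterlim_comp_2 (G := locally (lam * a)) (H := locally (mu * b))
           (fun x => lam * f x) (fun x => mu * g x) Rplus).
  - exact (filterlim_comp _ _ _ f (Rmult lam) F _ _ Hf
             (filterlim_scal_r (V := R_NormedModule) lam a)).
  - exact (filterlim_comp _ _ _ g (Rmult mu) F _ _ Hg
             (filterlim_scal_r (V := R_NormedModule) mu b)).
  - exact (filterlim_plus (V := R_NormedModule) (lam * a) (mu * b)).
Qed.

Lemma filterlim_le_of_near {T} (F : (T -> Prop) -> Prop) {FF : ProperFilter F}
  (f g : T -> R) (a b eps : R) :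
  filterlim f F (locally a) -> filterlim g F (locally b) ->
  F (fun x => Rabs (g x - f x) < eps) -> b <= a + eps.
Proof.
  intros Hf Hg Hnear.
  assert (Hdiff : filterlim (fun x => 1 * g x + -1 * f x) F (locally (1 * b + -1 * a)))
    by exact (filterlim_lincomb F g f b a 1 (-1) Hg Hf).
  assert (Hbelow : F (fun x => 1 * g x + -1 * f x <= eps)).
  { eapply filter_imp; [|exact Hnear]. intros x Hx.
    pose proof (Rle_abs (g x - f x)). lra. }
  pose proof (filterlim_le _ _ (Finite _) (Finite eps) Hbelow Hdiff (filterlim_const eps)).
  simpl in *. lra.
Qed.

Lemma filterlim_eventually_const {T} (F : (T -> Prop) -> Prop) {FF : ProperFilter F}
  (h : T -> R) (K l : R) :
  F (fun x => h x = K) -> filterlim h F (locally l) -> l = K.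
Proof.
  intros HK Hl.
  apply (filterlim_locally_unique (K := R_AbsRing) (V := R_NormedModule)
           (FF := Proper_StrongProper F FF) h); [exact Hl|].
  apply (filterlim_ext_loc (fun _ => K)); [|apply filterlim_const].
  eapply filter_imp; [|exact HK]. intros x Hx. symmetry. exact Hx.
Qed.

Lemma at_right_interval (a b : R) : a < b -> at_right a (fun t => a < t < b).
Proof.
  intros Hab. exists (mkposreal (b - a) ltac:(lra)). intros y Hy Hay.
  change (Rabs (y - a) < b - a) in Hy. apply Rabs_def2 in Hy. lra.
Qed.

Lemma at_left_interval (a b : R) : a < b -> at_left b (fun t => a < t < b).
Proof.
  intros Hab. exists (mkposreal (b - a) ltac:(lra)). intros y Hy Hyb.
  change (Rabs (y - b) < b - a) in Hy. apply Rabs_def2 in Hy. lra.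
Qed.

Lemma filterlim_eventually_bounded {T} (F : (T -> Prop) -> Prop) {FF : Filter F}
  (g : T -> R) (l : R) :
  filterlim g F (locally l) -> F (fun x => Rabs (g x) <= Rabs l + 1).
Proof.
  intros Hl. apply filterlim_locally with (eps := mkposreal 1 Rlt_0_1) in Hl.
  eapply filter_imp; [|exact Hl]. intros x Hx. change (Rabs (g x - l) < 1) in Hx.
  pose proof (Rabs_triang_inv (g x) l). lra.
Qed.

Lemma compact_interval_bounded (g : R -> R) (p q : R) :
  (forall t, p <= t <= q -> continuous g t) ->
  exists B, forall t, p <= t <= q -> Rabs (g t) <= B.
Proof.
  intros Hc. destruct (Rle_lt_dec p q) as [Hpq|Hqp].
  - assert (Habs : forall t, p <= t <= q -> continuity_pt (fun x => Rabs (g x)) t).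
    { intros t Ht. apply continuity_pt_filterlim.
      apply (filterlim_comp _ _ _ g Rabs (locally t) (locally (g t)) _ (Hc t Ht)).
      apply continuity_pt_filterlim, Rcontinuity_abs. }
    destruct (continuity_ab_maj _ p q Hpq Habs) as [tmax [Hmax _]].
    exists (Rabs (g tmax)). exact Hmax.
  - exists 0. intros t Ht. lra.
Qed.

Lemma bounded_of_one_sided_limits (g : R -> R) (a b la lb : R) :
  a < b -> (forall t, a < t < b -> continuous g t) ->
  filterlim g (at_right a) (locally la) -> filterlim g (at_left b) (locally lb) ->
  exists B, forall t, a < t < b -> Rabs (g t) <= B.
Proof.
  intros Hab Hc Ha Hb.
  destruct (filterlim_eventually_bounded _ _ _ Ha) as [da Hda].
  destruct (filterlim_eventually_bounded _ _ _ Hb) as [db Hdb].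
  pose proof (cond_pos da); pose proof (cond_pos db).
  set (p := Rmin (a + da / 2) ((a + b) / 2)).
  set (q := Rmax (b - db / 2) ((a + b) / 2)).
  assert (Hp : a < p /\ p <= a + da / 2 /\ p <= (a + b) / 2)
    by (repeat split; [apply Rmin_glb_lt; lra | apply Rmin_l | apply Rmin_r]).
  assert (Hq : b - db / 2 <= q /\ (a + b) / 2 <= q /\ q < b)
    by (repeat split; [apply Rmax_l | apply Rmax_r | apply Rmax_lub_lt; lra]).
  destruct (compact_interval_bounded g p q) as [Bm HBm].
  { intros t Ht. apply Hc. lra. }
  exists (Rmax (Rmax (Rabs la + 1) (Rabs lb + 1)) Bm).
  intros t Ht.
  destruct (Rlt_or_le t p) as [Htp|Htp]; [|destruct (Rle_or_lt t q) as [Htq|Htq]].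
  - assert (Hnear : Rabs (t - a) < da).
    { rewrite Rabs_right; lra. }
    specialize (Hda t Hnear (proj1 Ht)). simpl in Hda.
    apply (Rle_trans _ _ _ Hda). eapply Rle_trans; [|apply Rmax_l]. apply Rmax_l.
  - apply (Rle_trans _ _ _ (HBm t (conj Htp Htq))). apply Rmax_r.
  - assert (Hnear : Rabs (t - b) < db).
    { rewrite Rabs_left; lra. }
    specialize (Hdb t Hnear (proj2 Ht)). simpl in Hdb.
    apply (Rle_trans _ _ _ Hdb). eapply Rle_trans; [|apply Rmax_l]. apply Rmax_r.
Qed.

Lemma diff_const_of_equal_increments (f g : R -> R) (a b la ga lb gb : R) :
  a < b ->
  (forall x y, a < x -> x < y -> y < b -> f y - f x = g y - g x) ->
  filterlim f (at_right a) (locally la) -> filterlim g (at_right a) (locally ga) ->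
  filterlim f (at_left b) (locally lb) -> filterlim g (at_left b) (locally gb) ->
  (forall t, a < t < b -> f t - g t = lb - gb) /\ la - ga = lb - gb.
Proof.
  intros Hab Hinc Hfa Hga Hfb Hgb.
  set (m := (a + b) / 2).
  assert (Hconst : forall t, a < t < b -> f t - g t = f m - g m).
  { assert (Hm : a < m < b) by (unfold m; lra).
    intros t Ht. destruct (Rtotal_order t m) as [Htm|[->|Hmt]].
    - pose proof (Hinc t m (proj1 Ht) Htm (proj2 Hm)). lra.
    - reflexivity.
    - pose proof (Hinc m t (proj1 Hm) Hmt (proj2 Ht)). lra. }
  assert (Ha : la - ga = f m - g m).
  { replace (la - ga) with (1 * la + -1 * ga) by ring.
    apply (filterlim_eventually_const (at_right a) (fun t => 1 * f t + -1 * g t)).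
    - eapply filter_imp; [|exact (at_right_interval a b Hab)].
      intros t Ht. rewrite <- (Hconst t Ht). ring.
    - exact (filterlim_lincomb _ f g la ga 1 (-1) Hfa Hga). }
  assert (Hb : lb - gb = f m - g m).
  { replace (lb - gb) with (1 * lb + -1 * gb) by ring.
    apply (filterlim_eventually_const (at_left b) (fun t => 1 * f t + -1 * g t)).
    - eapply filter_imp; [|exact (at_left_interval a b Hab)].
      intros t Ht. rewrite <- (Hconst t Ht). ring.
    - exact (filterlim_lincomb _ f g lb gb 1 (-1) Hfb Hgb). }
  split; [intros t Ht; rewrite Hconst by exact Ht|]; lra.
Qed.

(* An unspecified real when [g] has no limit along [F]. *)
Definition filter_lim (F : (R -> Prop) -> Prop) (g : R -> R) : R :=
  epsilon (inhabits 0) (fun l => filterlim g F (locally l)).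

Lemma filter_lim_spec (F : (R -> Prop) -> Prop) {FF : ProperFilter F} (g : R -> R) (l : R) :
  filterlim g F (locally l) -> filter_lim F g = l.
Proof.
  intros Hl. unfold filter_lim.
  pose proof (epsilon_spec (inhabits 0) (fun l => filterlim g F (locally l)) (ex_intro _ l Hl)).
  apply (filterlim_locally_unique (K := R_AbsRing) (V := R_NormedModule)
           (FF := Proper_StrongProper F FF) g); assumption.
Qed.

Definition sumL {A} (l : list A) (F : A -> R) : R := fold_right Rplus 0 (map F l).

Lemma sumL_ext {A} (l : list A) (F G : A -> R) :
  (forall x, In x l -> F x = G x) -> sumL l F = sumL l G.
Proof.
  unfold sumL. induction l as [|a l IH]; intros H; simpl; [reflexivity|].
  rewrite H by (left; reflexivity). rewrite IH; [reflexivity|].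
  intros x Hx. apply H. right. exact Hx.
Qed.

Lemma sumL_zero {A} (l : list A) (F : A -> R) :
  (forall x, In x l -> F x = 0) -> sumL l F = 0.
Proof.
  intros H. rewrite (sumL_ext l F (fun _ => 0) H). clear.
  unfold sumL. induction l as [|a l IH]; simpl; [reflexivity|rewrite IH; ring].
Qed.

Lemma sumL_lincomb {A} (l : list A) (F G : A -> R) (a b : R) :
  sumL l (fun x => a * F x + b * G x) = a * sumL l F + b * sumL l G.
Proof. unfold sumL. induction l as [|x l IH]; simpl; [|rewrite IH]; ring. Qed.

Lemma sumL_scal {A} (l : list A) (F : A -> R) (a : R) :
  sumL l (fun x => a * F x) = a * sumL l F.
Proof. unfold sumL. induction l as [|x l IH]; simpl; [|rewrite IH]; ring. Qed.

Lemma sumL_swap {A B} (l1 : list A) (l2 : list B) (F : A -> B -> R) :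
  sumL l1 (fun a => sumL l2 (F a)) = sumL l2 (fun b => sumL l1 (fun a => F a b)).
Proof.
  induction l1 as [|a l1 IH].
  - symmetry. apply sumL_zero. reflexivity.
  - unfold sumL at 1. simpl. fold (sumL l1 (fun a => sumL l2 (F a))). rewrite IH.
    transitivity (sumL l2 (fun b => 1 * F a b + 1 * sumL l1 (fun a' => F a' b))).
    + rewrite sumL_lincomb. ring.
    + apply sumL_ext. intros b _. unfold sumL. simpl. ring.
Qed.

Lemma sumL_indicator_single {A} (l : list A) (P : A -> Prop)
  (dec : forall y, {P y} + {~ P y}) (x : A) (h : A -> R) :
  NoDup l -> In x l -> (forall y, P y <-> y = x) ->
  sumL l (fun y => if dec y then h y else 0) = h x.
Proof.
  intros Hnd Hx HP. induction l as [|a l IH]; [destruct Hx|].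
  inversion Hnd as [|? ? Ha Hnd']; subst.
  unfold sumL. simpl. fold (sumL l (fun y => if dec y then h y else 0)).
  destruct Hx as [->|Hx].
  - destruct (dec x) as [_|HnP]; [|exfalso; apply HnP, HP; reflexivity].
    rewrite sumL_zero; [ring|]. intros y Hy.
    destruct (dec y) as [Hy'|]; [|reflexivity].
    apply HP in Hy'. subst. contradiction.
  - destruct (dec a) as [Ha'|].
    + apply HP in Ha'. subst. contradiction.
    + rewrite IH by assumption. ring.
Qed.

Lemma sumL_nonpos {A} (l : list A) (F : A -> R) :
  (forall y, In y l -> F y <= 0) -> sumL l F <= 0.
Proof.
  unfold sumL. induction l as [|a l IH]; intros Hnp; simpl; [lra|].
  assert (F a <= 0) by (apply Hnp; left; reflexivity).
  assert (fold_right Rplus 0 (map F l) <= 0) by (apply IH; intros y Hy; apply Hnp; right; exact Hy).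
  lra.
Qed.

Lemma sumL_nonpos_le_term {A} (l : list A) (F : A -> R) (x : A) :
  (forall y, In y l -> F y <= 0) -> In x l -> sumL l F <= F x.
Proof.
  induction l as [|a l IH]; intros Hnp Hx; [destruct Hx|].
  assert (Hrest : forall y, In y l -> F y <= 0) by (intros y Hy; apply Hnp; right; exact Hy).
  unfold sumL. simpl. fold (sumL l F).
  destruct Hx as [->|Hx].
  - pose proof (sumL_nonpos l F Hrest). lra.
  - assert (F a <= 0) by (apply Hnp; left; reflexivity).
    pose proof (IH Hrest Hx). lra.
Qed.

Lemma list_min_pos {A} (l : list A) (g : A -> R) :
  (forall x, In x l -> 0 < g x) -> exists eps, 0 < eps /\ forall x, In x l -> eps <= g x.
Proof.
  induction l as [|a l IH]; intros Hpos.
  - exists 1. split; [lra|]. intros x [].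
  - destruct IH as [eps [Heps Hle]]; [intros x Hx; apply Hpos; right; exact Hx|].
    assert (0 < g a) by (apply Hpos; left; reflexivity).
    exists (Rmin eps (g a)). split; [apply Rmin_glb_lt; assumption|].
    intros x [<-|Hx]; [apply Rmin_r|]. eapply Rle_trans; [apply Rmin_l|auto].
Qed.

Lemma list_uniform_bound {A} (l : list A) (P : A -> R -> Prop) :
  (forall x B B', P x B -> B <= B' -> P x B') ->
  (forall x, In x l -> exists B, P x B) -> exists B, forall x, In x l -> P x B.
Proof.
  intros Hmono. induction l as [|a l IH]; intros Hex.
  - exists 0. intros x [].
  - destruct IH as [B1 H1]; [intros x Hx; apply Hex; right; exact Hx|].
    destruct (Hex a (or_introl eq_refl)) as [B2 H2].
    exists (Rmax B1 B2). intros x [<-|Hx].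
    + apply (Hmono _ B2); [exact H2|apply Rmax_r].
    + apply (Hmono _ B1); [apply H1, Hx|apply Rmax_l].
Qed.

Definition src_lim {M : MeasuredReebGraph} (c : rE M -> R -> R) (e : rE M) : R :=
  filter_lim (at_right (ea e)) (c e).
Definition tgt_lim {M : MeasuredReebGraph} (c : rE M -> R -> R) (e : rE M) : R :=
  filter_lim (at_left (eb e)) (c e).

Lemma ea_lt_eb {G : ReebGraph} (e : rE G) : ea e < eb e.
Proof. exact (edge_incr G e). Qed.

Lemma In_lE {G : ReebGraph} (e : rE G) : In e (lE G).
Proof. apply (proj2 (lE_listing G)). Qed.

Lemma sum_edges_indicator {G : ReebGraph} (P : rE G -> Prop) (F : rE G -> R) :
  sum_edges P F =
  sumL (lE G) (fun e => if excluded_middle_informative (P e) then F e else 0).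
Proof.
  unfold sum_edges, sumL. induction (lE G) as [|a l IH]; [reflexivity|]. simpl.
  destruct (excluded_middle_informative (P a)); simpl; rewrite IH; ring.
Qed.

Lemma sum_edges_lincomb {G : ReebGraph} (P : rE G -> Prop) (F F' : rE G -> R) (a b : R) :
  sum_edges P (fun e => a * F e + b * F' e) = a * sum_edges P F + b * sum_edges P F'.
Proof.
  rewrite !sum_edges_indicator, <- sumL_lincomb. apply sumL_ext. intros e _.
  destruct (excluded_middle_informative (P e)); ring.
Qed.

Lemma sum_edges_single {G : ReebGraph} (P : rE G -> Prop) (F : rE G -> R) (e : rE G) :
  (forall e', P e' <-> e' = e) -> sum_edges P F = F e.
Proof.
  intros HP. rewrite sum_edges_indicator.
  exact (sumL_indicator_single _ P (fun e' => excluded_middle_informative (P e')) e F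
           (proj1 (lE_listing G)) (In_lE e) HP).
Qed.

Lemma sum_edges_none {G : ReebGraph} (P : rE G -> Prop) (F : rE G -> R) :
  (forall e, ~ P e) -> sum_edges P F = 0.
Proof.
  intros HP. rewrite sum_edges_indicator. apply sumL_zero. intros e _.
  destruct (excluded_middle_informative (P e)) as [He|]; [contradiction (HP e)|reflexivity].
Qed.

Lemma sumL_edges_by_vertex {G : ReebGraph} (lv : list (rV G)) (sel : rE G -> rV G)
  (h : rV G -> R) (F : rE G -> R) :
  NoDup lv -> (forall v, In v lv) ->
  sumL (lE G) (fun e => h (sel e) * F e) =
  sumL lv (fun v => h v * sum_edges (fun e => sel e = v) F).
Proof.
  intros Hnd Hall.
  transitivity (sumL (lE G) (fun e => sumL lv (fun v =>
      if excluded_middle_informative (sel e = v) then h v * F e else 0))).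
  - apply sumL_ext. intros e _. symmetry.
    apply (sumL_indicator_single lv (fun v => sel e = v)
             (fun v => excluded_middle_informative (sel e = v)) (sel e) (fun v => h v * F e));
      [assumption|apply Hall|].
    intros v. split; intros; symmetry; assumption.
  - rewrite sumL_swap. apply sumL_ext. intros v _.
    rewrite sum_edges_indicator, <- sumL_scal.
    apply sumL_ext. intros e _. destruct (excluded_middle_informative (sel e = v)); ring.
Qed.

Section Circulations.

Variable M : MeasuredReebGraph.
Implicit Types c : rE M -> R -> R.

Lemma circulation_src_lim c e :
  is_circulation M c -> filterlim (c e) (at_right (ea e)) (locally (src_lim c e)).
Proof.
  intros [_ [Ls [Lt [Hlim _]]]]. unfold src_lim.
  rewrite (filter_lim_spec _ _ _ (proj1 (Hlim e))). apply Hlim.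
Qed.

Lemma circulation_tgt_lim c e :
  is_circulation M c -> filterlim (c e) (at_left (eb e)) (locally (tgt_lim c e)).
Proof.
  intros [_ [Ls [Lt [Hlim _]]]]. unfold tgt_lim.
  rewrite (filter_lim_spec _ _ _ (proj2 (Hlim e))). apply Hlim.
Qed.

Lemma circulation_increment c e x y :
  is_circulation M c -> ea e < x -> x < y -> y < eb e ->
  c e y - c e x = RInt (fun t => t * rho M e t) x y.
Proof. intros [_ [_ [_ [_ [Hinc _]]]]]. apply Hinc. Qed.

Lemma circulation_kirchhoff c (v : rV M) :
  is_circulation M c ->
  sum_edges (fun e => tgt e = v) (tgt_lim c) = sum_edges (fun e => src e = v) (src_lim c).
Proof.
  intros [_ [Ls [Lt [Hlim [_ Hk]]]]].
  replace (src_lim c) with Ls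
    by (extensionality e; symmetry; exact (filter_lim_spec _ _ _ (proj1 (Hlim e)))).
  replace (tgt_lim c) with Lt
    by (extensionality e; symmetry; exact (filter_lim_spec _ _ _ (proj2 (Hlim e)))).
  apply Hk.
Qed.

Lemma circulation_comb c c' lam :
  is_circulation M c -> is_circulation M c' -> is_circulation M (comb lam c c').
Proof.
  intros Hc Hc'. split.
  - intros e t Ht.
    exact (filterlim_lincomb _ _ _ _ _ _ _ (proj1 Hc e t Ht) (proj1 Hc' e t Ht)).
  - exists (fun e => lam * src_lim c e + (1 - lam) * src_lim c' e).
    exists (fun e => lam * tgt_lim c e + (1 - lam) * tgt_lim c' e).
    split; [|split].
    + intros e. split.
      * apply (filterlim_lincomb (at_right _)); apply circulation_src_lim; assumption.
      * apply (filterlim_lincomb (at_left _)); apply circulation_tgt_lim; assumption.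
    + intros e x y Hx Hxy Hy. unfold comb.
      transitivity (lam * (c e y - c e x) + (1 - lam) * (c' e y - c' e x)); [ring|].
      rewrite !(circulation_increment _ e x y) by assumption. ring.
    + intros v. rewrite !sum_edges_lincomb, !circulation_kirchhoff by assumption.
      reflexivity.
Qed.

Lemma src_lim_comb c c' lam e :
  is_circulation M c -> is_circulation M c' ->
  src_lim (comb lam c c') e = lam * src_lim c e + (1 - lam) * src_lim c' e.
Proof.
  intros Hc Hc'. apply (filter_lim_spec _ (FF := at_right_proper_filter _)).
  apply (filterlim_lincomb (at_right _));
    apply circulation_src_lim; assumption.
Qed.

Lemma tgt_lim_comb c c' lam e :
  is_circulation M c -> is_circulation M c' ->
  tgt_lim (comb lam c c') e = lam * tgt_lim c e + (1 - lam) * tgt_lim c' e.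
Proof.
  intros Hc Hc'. apply (filter_lim_spec _ (FF := at_left_proper_filter _)).
  apply (filterlim_lincomb (at_left _));
    apply circulation_tgt_lim; assumption.
Qed.

Lemma circulation_diff c c0 e :
  is_circulation M c -> is_circulation M c0 ->
  (forall t, ea e < t < eb e -> c e t - c0 e t = tgt_lim c e - tgt_lim c0 e) /\
  src_lim c e - src_lim c0 e = tgt_lim c e - tgt_lim c0 e.
Proof.
  intros Hc Hc0. apply diff_const_of_equal_increments;
    auto using ea_lt_eb, circulation_src_lim, circulation_tgt_lim.
  intros x y Hx Hxy Hy. rewrite !(circulation_increment _ e x y) by assumption.
  reflexivity.
Qed.

Lemma TN_iff_lims c :
  TN M c <-> is_circulation M c /\
    forall e, (trivalent (src e) -> src_lim c e < 0) /\ (trivalent (tgt e) -> tgt_lim c e < 0).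
Proof.
  split.
  - intros [Hc Hneg]. split; [exact Hc|]. intros e. split; intros Htri.
    + destruct (proj1 (Hneg e) Htri) as [l [Hl Hlim]].
      unfold src_lim. rewrite (filter_lim_spec _ _ _ Hlim). exact Hl.
    + destruct (proj2 (Hneg e) Htri) as [l [Hl Hlim]].
      unfold tgt_lim. rewrite (filter_lim_spec _ _ _ Hlim). exact Hl.
  - intros [Hc Hneg]. split; [exact Hc|]. intros e. split; intros Htri.
    + exists (src_lim c e). split; [apply Hneg, Htri|apply circulation_src_lim, Hc].
    + exists (tgt_lim c e). split; [apply Hneg, Htri|apply circulation_tgt_lim, Hc].
Qed.

End Circulations.

Section EndConstraints.

Variable M : MeasuredReebGraph.
Implicit Types c : rE M -> R -> R.

Definition end_constraints : list ((rE M -> R -> R) -> R) :=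
  flat_map (fun e =>
    (if excluded_middle_informative (trivalent (src e)) then (fun c => src_lim c e) :: nil
     else nil) ++
    (if excluded_middle_informative (trivalent (tgt e)) then (fun c => tgt_lim c e) :: nil
     else nil)) (lE M).

Lemma In_end_constraints (L : (rE M -> R -> R) -> R) :
  In L end_constraints <->
  exists e, (trivalent (src e) /\ L = fun c => src_lim c e) \/
            (trivalent (tgt e) /\ L = fun c => tgt_lim c e).
Proof.
  unfold end_constraints. rewrite in_flat_map. split.
  - intros [e [_ HL]]. exists e. apply in_app_or in HL. destruct HL as [HL|HL].
    + left. destruct (excluded_middle_informative (trivalent (src e))) as [Htri|];
        [|destruct HL]. destruct HL as [<-|[]]. split; [exact Htri|reflexivity].
    + right. destruct (excluded_middle_informative (trivalent (tgt e))) as [Htri|];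
        [|destruct HL]. destruct HL as [<-|[]]. split; [exact Htri|reflexivity].
  - intros [e He]. exists e. split; [apply In_lE|]. apply in_or_app.
    destruct He as [[Htri ->]|[Htri ->]].
    + left. destruct (excluded_middle_informative (trivalent (src e))); [|contradiction].
      left. reflexivity.
    + right. destruct (excluded_middle_informative (trivalent (tgt e))); [|contradiction].
      left. reflexivity.
Qed.

Lemma TN_iff_end_constraints c :
  TN M c <-> is_circulation M c /\ forall L, In L end_constraints -> L c < 0.
Proof.
  rewrite TN_iff_lims. split; intros [Hc Hneg]; split; try exact Hc.
  - intros L HL. apply In_end_constraints in HL.
    destruct HL as [e [[Htri ->]|[Htri ->]]]; apply (Hneg e), Htri.
  - intros e. split; intros Htri; apply (Hneg (fun c => _ c e)), In_end_constraints;
      exists e; [left|right]; split; (assumption || reflexivity).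
Qed.

Lemma end_constraint_affine L c c' lam :
  In L end_constraints -> is_circulation M c -> is_circulation M c' ->
  L (comb lam c c') = lam * L c + (1 - lam) * L c'.
Proof.
  intros HL Hc Hc'. apply In_end_constraints in HL.
  destruct HL as [e [[_ ->]|[_ ->]]];
    auto using src_lim_comb, tgt_lim_comb.
Qed.

Lemma end_constraint_le_of_near L c c' eps :
  In L end_constraints -> is_circulation M c -> is_circulation M c' ->
  (forall e t, ea e < t < eb e -> Rabs (c' e t - c e t) < eps) -> L c' <= L c + eps.
Proof.
  intros HL Hc Hc' Hnear. apply In_end_constraints in HL.
  destruct HL as [e [[_ ->]|[_ ->]]].
  - apply (filterlim_le_of_near (at_right (ea e)) (c e) (c' e));
      [apply circulation_src_lim; assumption|apply circulation_src_lim; assumption|].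
    eapply filter_imp; [|exact (at_right_interval _ _ (ea_lt_eb e))]. apply Hnear.
  - apply (filterlim_le_of_near (at_left (eb e)) (c e) (c' e));
      [apply circulation_tgt_lim; assumption|apply circulation_tgt_lim; assumption|].
    eapply filter_imp; [|exact (at_left_interval _ _ (ea_lt_eb e))]. apply Hnear.
Qed.

End EndConstraints.

Lemma TN_polytope (M : MeasuredReebGraph) :
  exists (k : nat) (L : nat -> (rE M -> R -> R) -> R),
    (forall i c c' lam, (i < k)%nat -> is_circulation M c -> is_circulation M c' ->
       L i (comb lam c c') = lam * L i c + (1 - lam) * L i c') /\
    (forall c, TN M c <-> (is_circulation M c /\ forall i, (i < k)%nat -> L i c < 0)).
Proof.
  set (Ls := end_constraints M).
  exists (length Ls), (fun i => nth i Ls (fun _ => 0)). split.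
  - intros i c c' lam Hi. apply end_constraint_affine, nth_In, Hi.
  - intros c. rewrite TN_iff_end_constraints. split; intros [Hc Hneg]; split; try exact Hc.
    + intros i Hi. apply Hneg, nth_In, Hi.
    + intros L HL. destruct (In_nth _ _ (fun _ => 0) HL) as [i [Hi <-]]. apply Hneg, Hi.
Qed.

Lemma TN_convex (M : MeasuredReebGraph) c c' lam :
  0 <= lam <= 1 -> TN M c -> TN M c' -> TN M (comb lam c c').
Proof.
  rewrite !TN_iff_end_constraints. intros Hlam [Hc Hneg] [Hc' Hneg'].
  split; [apply circulation_comb; assumption|].
  intros L HL. rewrite end_constraint_affine by assumption.
  pose proof (Hneg L HL); pose proof (Hneg' L HL). nra.
Qed.

Lemma TN_open (M : MeasuredReebGraph) c :
  TN M c -> exists eps, 0 < eps /\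
    forall c', is_circulation M c' ->
      (forall e t, ea e < t < eb e -> Rabs (c' e t - c e t) < eps) -> TN M c'.
Proof.
  rewrite TN_iff_end_constraints. intros [Hc Hneg].
  destruct (list_min_pos (end_constraints M) (fun L => - L c / 2)) as [eps [Heps Hle]].
  { intros L HL. pose proof (Hneg L HL). lra. }
  exists eps. split; [exact Heps|]. intros c' Hc' Hnear.
  apply TN_iff_end_constraints. split; [exact Hc'|]. intros L HL.
  pose proof (end_constraint_le_of_near M L c c' eps HL Hc Hc' Hnear).
  pose proof (Hneg L HL). pose proof (Hle L HL). lra.
Qed.

Section Boundedness.

Variable M : MeasuredReebGraph.
Implicit Types c : rE M -> R -> R.

Lemma tgt_lim_at_univalent c e :
  is_circulation M c -> univalent (tgt e) -> tgt_lim c e = 0.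
Proof.
  intros Hc [e1 [_ Honly]].
  assert (He : e = e1) by (apply Honly; right; reflexivity). subst e1.
  pose proof (circulation_kirchhoff M c (tgt e) Hc) as Hk.
  rewrite (sum_edges_single _ _ e) in Hk.
  - rewrite Hk. apply sum_edges_none. intros e' Hsrc.
    assert (e' = e) by (apply Honly; left; exact Hsrc). subst e'.
    pose proof (ea_lt_eb e). unfold ea, eb in *. rewrite Hsrc in *. lra.
  - intros e'. split; intros Htgt; [apply Honly; right; exact Htgt|subst; reflexivity].
Qed.

Lemma TN_tgt_lim_nonpos c e : TN M c -> tgt_lim c e <= 0.
Proof.
  intros HTN. destruct (valence M (tgt e)) as [Huni|Htri].
  - rewrite tgt_lim_at_univalent; [lra|apply HTN|exact Huni].
  - apply Rlt_le. apply (proj2 (proj1 (TN_iff_lims M c) HTN) e), Htri.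
Qed.

Lemma circulation_moment_balance c :
  is_circulation M c ->
  sumL (lE M) (fun e => eb e * tgt_lim c e) = sumL (lE M) (fun e => ea e * src_lim c e).
Proof.
  intros Hc.
  assert (Hfin : Finite' (rV M)).
  { apply Finite_dec. split; [apply V_finite|]. intros x y. apply classic. }
  destruct Hfin as [lv [Hnd Hall]]. unfold ea, eb.
  rewrite (sumL_edges_by_vertex lv tgt fv), (sumL_edges_by_vertex lv src fv) by assumption.
  apply sumL_ext. intros v _. rewrite circulation_kirchhoff by exact Hc. reflexivity.
Qed.

Definition length_weighted_tgt_flux c : R :=
  sumL (lE M) (fun e => (eb e - ea e) * tgt_lim c e).

Lemma length_weighted_tgt_flux_invariant c c0 :
  is_circulation M c -> is_circulation M c0 ->
  length_weighted_tgt_flux c = length_weighted_tgt_flux c0.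
Proof.
  assert (Hform : forall d, is_circulation M d ->
            length_weighted_tgt_flux d = sumL (lE M) (fun e => ea e * (src_lim d e - tgt_lim d e))).
  { intros d Hd. unfold length_weighted_tgt_flux.
    transitivity (1 * sumL (lE M) (fun e => eb e * tgt_lim d e)
                  + -1 * sumL (lE M) (fun e => ea e * tgt_lim d e)).
    - rewrite <- sumL_lincomb. apply sumL_ext. intros e _. ring.
    - rewrite circulation_moment_balance by exact Hd.
      rewrite <- sumL_lincomb. apply sumL_ext. intros e _. ring. }
  intros Hc Hc0. rewrite !Hform by assumption. apply sumL_ext. intros e _.
  destruct (circulation_diff M c c0 e Hc Hc0) as [_ Hdiff].
  replace (src_lim c e - tgt_lim c e) with (src_lim c0 e - tgt_lim c0 e) by lra.
  reflexivity.
Qed.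

Lemma TN_tgt_lim_abs_le c0 c e :
  TN M c0 -> TN M c ->
  Rabs (tgt_lim c e) <= - length_weighted_tgt_flux c0 / (eb e - ea e).
Proof.
  intros H0 Hc.
  assert (Hterm : length_weighted_tgt_flux c <= (eb e - ea e) * tgt_lim c e).
  { apply (sumL_nonpos_le_term (lE M) (fun e' => (eb e' - ea e') * tgt_lim c e'));
      [|apply In_lE]. intros e' _.
    pose proof (ea_lt_eb e'). pose proof (TN_tgt_lim_nonpos c e' Hc). nra. }
  rewrite (length_weighted_tgt_flux_invariant c c0) in Hterm by (apply H0 || apply Hc).
  assert (Hlen : 0 < eb e - ea e) by (pose proof (ea_lt_eb e); lra).
  rewrite Rabs_left1 by (apply TN_tgt_lim_nonpos, Hc).
  apply (Rmult_le_reg_l (eb e - ea e)); [exact Hlen|].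
  replace ((eb e - ea e) * (- length_weighted_tgt_flux c0 / (eb e - ea e)))
    with (- length_weighted_tgt_flux c0) by (field; lra).
  lra.
Qed.

Lemma TN_bounded :
  exists B, forall c, TN M c -> forall e t, ea e < t < eb e -> Rabs (c e t) <= B.
Proof.
  destruct (classic (exists c0, TN M c0)) as [[c0 H0]|Hnone].
  2: { exists 0. intros c Hc. exfalso. apply Hnone. exists c. exact Hc. }
  destruct (list_uniform_bound (lE M) (fun e B =>
              forall c, TN M c -> forall t, ea e < t < eb e -> Rabs (c e t) <= B))
    as [B HB].
  - intros e B B' HB HBB' c Hc t Ht. specialize (HB c Hc t Ht). lra.
  - intros e _.
    destruct (bounded_of_one_sided_limits (c0 e) (ea e) (eb e) (src_lim c0 e) (tgt_lim c0 e))
      as [B0 HB0];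
      [apply ea_lt_eb|apply (proj1 H0)|apply circulation_src_lim, H0|apply circulation_tgt_lim, H0|].
    exists (B0 + 2 * (- length_weighted_tgt_flux c0 / (eb e - ea e))).
    intros c Hc t Ht.
    destruct (circulation_diff M c c0 e (proj1 Hc) (proj1 H0)) as [Hdiff _].
    replace (c e t) with (c0 e t + tgt_lim c e - tgt_lim c0 e)
      by (pose proof (Hdiff t Ht); lra).
    pose proof (HB0 t Ht).
    pose proof (TN_tgt_lim_abs_le c0 c e H0 Hc).
    pose proof (TN_tgt_lim_abs_le c0 c0 e H0 H0).
    pose proof (Rabs_triang (c0 e t + tgt_lim c e) (- tgt_lim c0 e)).
    pose proof (Rabs_triang (c0 e t) (tgt_lim c e)).
    rewrite Rabs_Ropp in *. unfold Rminus in *. lra.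
  - exists B. intros c Hc e t Ht. exact (HB e (In_lE e) c Hc t Ht).
Qed.

End Boundedness.

Theorem theorem4p25 (M : MeasuredReebGraph) :
  (* the set is an intersection of finitely many open half-spaces of the
     affine space of circulation functions (i.e. an open convex polytope) *)
  (exists (k : nat) (L : nat -> (rE M -> R -> R) -> R),
     (forall i c c' lam, (i < k)%nat -> is_circulation M c -> is_circulation M c' ->
        L i (comb lam c c') = lam * L i c + (1 - lam) * L i c') /\
     (forall c, TN M c <-> (is_circulation M c /\ forall i, (i < k)%nat -> L i c < 0))) /\
  (* convex *)
  (forall c c' lam, 0 <= lam <= 1 -> TN M c -> TN M c' -> TN M (comb lam c c')) /\
  (* open in the affine space of circulation functions (sup-distance) *)
  (forall c, TN M c -> exists eps, 0 < eps /\
     forall c', is_circulation M c' ->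
       (forall e t, ea e < t < eb e -> Rabs (c' e t - c e t) < eps) -> TN M c') /\
  (* bounded *)
  (exists B, forall c, TN M c -> forall e t, ea e < t < eb e -> Rabs (c e t) <= B).
Proof.
  split; [exact (TN_polytope M)|].
  split; [exact (TN_convex M)|].
  split; [exact (TN_open M)|].
  exact (TN_bounded M).
Qed.
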